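(* Consider the GTFG system with $\lambda=0$ (setting below) and the invariant set $\mathcal M_1=\{\xi_1=0,\ \xi_2=0\}\subset\mathcal P^6$, where $\xi_1=w_1^2+\varepsilon_0x_1-\mathrm i\varepsilon_1(x_1w_3-2z_1w_1)-\varepsilon_1^2r^2$, $\xi_2=w_2^2+\varepsilon_0x_2+\mathrm i\varepsilon_1(x_2w_3-2z_2w_2)-\varepsilon_1^2r^2$ (so that $K=\xi_1\xi_2$). Let $$N=\sqrt{[\varepsilon_0+\mathrm i\varepsilon_1(w_3+\mathrm i\varepsilon_1y_1)][\varepsilon_0-\mathrm i\varepsilon_1(w_3-\mathrm i\varepsilon_1y_2)]}+\varepsilon_1^2\sqrt{x_1x_2},$$ $$F=\sqrt{x_1x_2}\,w_3-\frac{x_2z_1w_1+x_1z_2w_2}{\sqrt{x_1x_2}}+\mathrm i\varepsilon_1r^2\frac{x_1-x_2}{\sqrt{x_1x_2}}.$$ Then the points of $\mathcal M_1$ have outer type ''center'', except for the points with $N\,F=0$, which are degenerate with respect to the whole system on $\mathcal P^6$. (Here, with $\Phi=K$, one has $C_\Phi=-4N^2F^2$.)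
   Context: Phase variables $\mathbf M,\boldsymbol\alpha,\boldsymbol\beta\in\mathbb R^3$ on $e(3,2)^*\cong\mathbb R^9$ with Lie–Poisson dynamics: a function $\Phi$ generates the vector field $\mathrm{sgrad}\,\Phi$: $\dot{\mathbf M}=\mathbf M\times\partial\Phi/\partial\mathbf M+\boldsymbol\alpha\times\partial\Phi/\partial\boldsymbol\alpha+\boldsymbol\beta\times\partial\Phi/\partial\boldsymbol\beta$, $\dot{\boldsymbol\alpha}=\boldsymbol\alpha\times\partial\Phi/\partial\mathbf M$, $\dot{\boldsymbol\beta}=\boldsymbol\beta\times\partial\Phi/\partial\mathbf M$. Constants $a>b>0$, $r^2=a^2-b^2$; phase space $\mathcal P^6=\{\boldsymbol\alpha^2=a^2,\boldsymbol\beta^2=b^2,\boldsymbol\alpha\cdot\boldsymbol\beta=0\}$. Real parameters $\varepsilon_0\ge0,\varepsilon_1,\lambda$. GTFG Hamiltonian $H=\tfrac14(M_1^2+M_2^2)+\tfrac12(M_3-\lambda)^2-\varepsilon_1[(\alpha_2M_3-\alpha_3M_2)+(\beta_3M_1-\beta_1M_3)]-\varepsilon_0(\alpha_1+\beta_2)$. Complex variables: $x_{1,2}=(\alpha_1-\beta_2)\pm\mathrm i(\alpha_2+\beta_1)$, $y_{1,2}=(\alpha_1+\beta_2)\pm\mathrm i(\alpha_2-\beta_1)$, $z_{1,2}=\alpha_3\pm\mathrm i\beta_3$, $w_{1,2}=\tfrac12(M_1\pm\mathrm iM_2)$, $w_3=M_3-\lambda$. Both square roots in $N$ are of nonnegative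 real numbers (the first radicand is $|\cdot|^2$, $x_1x_2=|x_1|^2$) and are taken nonnegative. With $\lambda=0$ the function $K=\xi_1\xi_2$ is a first integral of the GTFG system, and $\mathcal M_1=\{K=0,dK=0\}$. Outer type: for a critical subsystem $\mathcal M$ given as $\{\Phi=0,\ d\Phi=0\}$ for a first integral $\Phi$ (here $\Phi=K$), each $x\in\mathcal M$ is a zero of $\mathrm{sgrad}\,\Phi$; let $A_\Phi$ be its linearization at $x$ (a linear operator on $\mathbb R^9$). Its characteristic polynomial has the form $-\mu^7(\mu^2-C_\Phi)$, $C_\Phi=\tfrac12\operatorname{tr}(A_\Phi^2)$. The outer type of $x$ is ''center'' if $C_\Phi<0$, ''saddle'' if $C_\Phi>0$, and $x$ is degenerate if $C_\Phi=0$. *)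

From Stdlib Require Import Reals Arith.
From Coquelicot Require Import Coquelicot.
Open Scope R_scope.

(** A point of e(3,2)^* ~ R^9, coordinates indexed 0..8:
    0,1,2 = M1,M2,M3 ; 3,4,5 = alpha1,alpha2,alpha3 ; 6,7,8 = beta1,beta2,beta3.
    (Values at indices >= 9 are irrelevant.) *)
Definition pt := nat -> R.

Definition Mc (p : pt) (i : nat) : R := p i.
Definition al (p : pt) (i : nat) : R := p (3 + i)%nat.
Definition be (p : pt) (i : nat) : R := p (6 + i)%nat.

Definition upd (p : pt) (k : nat) (t : R) : pt :=
  fun i => if Nat.eqb i k then t else p i.

Definition pd (f : pt -> R) (k : nat) (p : pt) : R :=
  Derive (fun t => f (upd p k t)) (p k).

Definition blk (p : pt) (off : nat) : nat -> R := fun i => p (off + i)%nat.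
Definition gblk (f : pt -> R) (p : pt) (off : nat) : nat -> R :=
  fun i => pd f (off + i)%nat p.

Definition crossc (u v : nat -> R) (i : nat) : R :=
  match i with
  | 0%nat => u 1%nat * v 2%nat - u 2%nat * v 1%nat
  | 1%nat => u 2%nat * v 0%nat - u 0%nat * v 2%nat
  | 2%nat => u 0%nat * v 1%nat - u 1%nat * v 0%nat
  | _ => 0
  end.

(** Lie--Poisson Hamiltonian vector field sgrad Phi on e(3,2)^*:
    Mdot = M x dPhi/dM + alpha x dPhi/dalpha + beta x dPhi/dbeta,
    alphadot = alpha x dPhi/dM, betadot = beta x dPhi/dM. *)
Definition sgrad (Phi : pt -> R) (p : pt) : pt :=
  fun j =>
    if (j <? 3)%nat then
      crossc (blk p 0) (gblk Phi p 0) j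
      + crossc (blk p 3) (gblk Phi p 3) j
      + crossc (blk p 6) (gblk Phi p 6) j
    else if (j <? 6)%nat then crossc (blk p 3) (gblk Phi p 0) (j - 3)
    else if (j <? 9)%nat then crossc (blk p 6) (gblk Phi p 0) (j - 6)
    else 0.

Definition Alin (Phi : pt -> R) (p : pt) (j k : nat) : R :=
  Derive (fun t => sgrad Phi (upd p k t) j) (p k).

Definition CPhi (Phi : pt -> R) (p : pt) : R :=
  / 2 * sum_f_R0 (fun j => sum_f_R0 (fun k => Alin Phi p j k * Alin Phi p k j) 8) 8.

Definition outer_center (Phi : pt -> R) (p : pt) : Prop := CPhi Phi p < 0.
Definition outer_saddle (Phi : pt -> R) (p : pt) : Prop := CPhi Phi p > 0.
Definition outer_degenerate (Phi : pt -> R) (p : pt) : Prop := CPhi Phi p = 0.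

Definition inP6 (a b : R) (p : pt) : Prop :=
  al p 0 ^ 2 + al p 1 ^ 2 + al p 2 ^ 2 = a ^ 2 /\
  be p 0 ^ 2 + be p 1 ^ 2 + be p 2 ^ 2 = b ^ 2 /\
  al p 0 * be p 0 + al p 1 * be p 1 + al p 2 * be p 2 = 0.

Definition x1 (p : pt) : C := (al p 0 - be p 1, al p 1 + be p 0).
Definition x2 (p : pt) : C := (al p 0 - be p 1, - (al p 1 + be p 0)).
Definition y1 (p : pt) : C := (al p 0 + be p 1, al p 1 - be p 0).
Definition y2 (p : pt) : C := (al p 0 + be p 1, - (al p 1 - be p 0)).
Definition z1 (p : pt) : C := (al p 2, be p 2).
Definition z2 (p : pt) : C := (al p 2, - be p 2).
Definition w1 (p : pt) : C := (/ 2 * Mc p 0, / 2 * Mc p 1).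
Definition w2 (p : pt) : C := (/ 2 * Mc p 0, - (/ 2 * Mc p 1)).
Definition w3 (lam : R) (p : pt) : C := RtoC (Mc p 2 - lam).

Local Open Scope C_scope.

(** xi_1, xi_2 ; r2 stands for r^2 = a^2 - b^2 *)
Definition xi1 (a b eps0 eps1 lam : R) (p : pt) : C :=
  w1 p * w1 p + RtoC eps0 * x1 p
  - Ci * RtoC eps1 * (x1 p * w3 lam p - RtoC 2 * z1 p * w1 p)
  - RtoC (eps1 ^ 2 * (a ^ 2 - b ^ 2)).
Definition xi2 (a b eps0 eps1 lam : R) (p : pt) : C :=
  w2 p * w2 p + RtoC eps0 * x2 p
  + Ci * RtoC eps1 * (x2 p * w3 lam p - RtoC 2 * z2 p * w2 p)
  - RtoC (eps1 ^ 2 * (a ^ 2 - b ^ 2)).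

(** K = xi1 * xi2 ; this product is real (xi2 is the complex conjugate of
    xi1), so K is its real part. *)
Definition Kfun (a b eps0 eps1 lam : R) (p : pt) : R :=
  Re (xi1 a b eps0 eps1 lam p * xi2 a b eps0 eps1 lam p).

(** sqrt (x1 x2) (x1 x2 = |x1|^2 is real and nonnegative) *)
Definition sqx (p : pt) : R := sqrt (Re (x1 p * x2 p)).

Definition Nfun (eps0 eps1 lam : R) (p : pt) : R :=
  sqrt (Re ((RtoC eps0 + Ci * RtoC eps1 * (w3 lam p + Ci * RtoC eps1 * y1 p))
          * (RtoC eps0 - Ci * RtoC eps1 * (w3 lam p - Ci * RtoC eps1 * y2 p))))
  + eps1 ^ 2 * sqx p.

(** F (a real number; taken as the real part of the complex expression).
    Division uses Coquelicot's total complex division. *)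
Definition Ffun (a b eps1 lam : R) (p : pt) : R :=
  Re (RtoC (sqx p) * w3 lam p
      - (x2 p * z1 p * w1 p + x1 p * z2 p * w2 p) / RtoC (sqx p)
      + Ci * RtoC eps1 * RtoC (a ^ 2 - b ^ 2) * (x1 p - x2 p) / RtoC (sqx p)).

From Stdlib Require Import Reals Lra Lia FunctionalExtensionality.
From Coquelicot Require Import Coquelicot.
Open Scope R_scope.

(* At a point of M1 the integral K = |xi1|^2 = f^2 + g^2 (f, g the real and
   imaginary parts of xi1; xi2 is the conjugate of xi1) vanishes to second
   order, so the linearization of sgrad K there is 2 Pi (df df^T + dg dg^T),
   Pi the Lie-Poisson tensor.  Since Pi is skew, half the trace of its square
   is -4 {f,g}^2.
   On P^6 the identity x1 y2 + z1^2 = r^2 turns xi1 into W^2 + x1 Y with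
   W = w1 + i eps1 z1 and Y = eps0 - i eps1 (w3 - i eps1 y2).  Hence on M1
   |W|^2 = |x1| |Y|, while N = |Y| + eps1^2 |x1| and F |x1| is a polynomial.
   An explicit polynomial identity then expresses {f,g} |x1|^2 + (|W|^2 +
   eps1^2 |x1|^2) F |x1| through xi1 and alpha.beta, which gives
   {f,g} = - N F where x1 <> 0; where x1 = 0 also W = 0, both gradients have
   no momentum component, and {f,g} = 0 = F. *)

Definition poisson (q : pt) (v : nat -> R) : pt :=
  fun j =>
    if (j <? 3)%nat then
      crossc (blk q 0) (blk v 0) j + crossc (blk q 3) (blk v 3) j
      + crossc (blk q 6) (blk v 6) j
    else if (j <? 6)%nat then crossc (blk q 3) (blk v 0) (j - 3)
    else if (j <? 9)%nat then crossc (blk q 6) (blk v 0) (j - 6)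
    else 0.

Definition pairing (u v : nat -> R) : R := sum_f_R0 (fun j => u j * v j) 8.

Lemma poisson_linear (q u v : pt) (c d : R) (j : nat) :
  poisson q (fun i => c * u i + d * v i) j = c * poisson q u j + d * poisson q v j.
Proof.
  unfold poisson, crossc, blk.
  destruct j as [|[|[|[|[|[|[|[|[|j]]]]]]]]]; cbn; ring.
Qed.

Lemma pairing_poisson_skew (q u v : pt) :
  pairing u (poisson q v) = - pairing v (poisson q u).
Proof. unfold pairing, poisson, crossc, blk; cbn. ring. Qed.

Lemma pairing_poisson_momentum_free (q u v : pt) :
  (forall i, (i < 3)%nat -> u i = 0) -> (forall i, (i < 3)%nat -> v i = 0) ->
  pairing u (poisson q v) = 0.
Proof.
  intros Hu Hv.
  unfold pairing, poisson, crossc, blk; cbn.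
  rewrite (Hu 0%nat), (Hu 1%nat), (Hu 2%nat), (Hv 0%nat), (Hv 1%nat), (Hv 2%nat) by lia; ring.
Qed.

Lemma double_sum_rank_two (u v a b : nat -> R) :
  sum_f_R0 (fun j => sum_f_R0 (fun k =>
    (u k * a j + v k * b j) * (u j * a k + v j * b k)) 8) 8
  = pairing u a ^ 2 + 2 * pairing u b * pairing v a + pairing v b ^ 2.
Proof. unfold pairing; cbn; ring. Qed.

Lemma half_trace_poisson_rank_two (q u v : pt) :
  / 2 * sum_f_R0 (fun j => sum_f_R0 (fun k =>
      (2 * (u k * poisson q u j + v k * poisson q v j))
    * (2 * (u j * poisson q u k + v j * poisson q v k))) 8) 8
  = - 4 * pairing u (poisson q v) ^ 2.
Proof.
  assert (Hu : pairing u (poisson q u) = 0)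
    by (pose proof (pairing_poisson_skew q u u); lra).
  assert (Hv : pairing v (poisson q v) = 0)
    by (pose proof (pairing_poisson_skew q v v); lra).
  pose proof (double_sum_rank_two u v (poisson q u) (poisson q v)) as Hsum.
  rewrite Hu, Hv, (pairing_poisson_skew q v u) in Hsum.
  assert (Hscale : forall x y : nat -> nat -> R,
    sum_f_R0 (fun j => sum_f_R0 (fun k => (2 * x j k) * (2 * y j k)) 8) 8
    = 4 * sum_f_R0 (fun j => sum_f_R0 (fun k => x j k * y j k) 8) 8)
    by (intros; cbn [sum_f_R0]; ring).
  rewrite (Hscale (fun j k => u k * poisson q u j + v k * poisson q v j)
                  (fun j k => u j * poisson q u k + v j * poisson q v k)), Hsum.
  field.
Qed.

Lemma upd_same (q : pt) (k : nat) : upd q k (q k) = q.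
Proof.
  apply functional_extensionality; intro i; unfold upd.
  destruct (Nat.eqb_spec i k); congruence.
Qed.

(* Coquelicot states these rules with the module operations [plus], [minus],
   [zero], which [ring] does not see through. *)
Lemma is_derive_Rconst (c x : R) : is_derive (fun _ => c) x 0.
Proof. apply (is_derive_const c x). Qed.

Lemma is_derive_upd (q : pt) (k i : nat) :
  is_derive (fun t => upd q k t i) (q k) (if Nat.eqb i k then 1 else 0).
Proof.
  unfold upd; destruct (Nat.eqb i k).
  - apply (is_derive_id (q k)).
  - apply is_derive_Rconst.
Qed.

Lemma is_derive_pd (f : pt -> R) (q : pt) (k : nat) :
  ex_derive (fun t => f (upd q k t)) (q k) ->
  is_derive (fun t => f (upd q k t)) (q k) (pd f k q).
Proof. apply Derive_correct. Qed.

Lemma is_derive_val (f : R -> R) (x l l' : R) :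
  is_derive f x l -> l = l' -> is_derive f x l'.
Proof. now intros H <-. Qed.

Lemma is_derive_Rplus (f g : R -> R) (x a b : R) :
  is_derive f x a -> is_derive g x b -> is_derive (fun t => f t + g t) x (a + b).
Proof. apply (is_derive_plus f g x a b). Qed.

Lemma is_derive_Rminus (f g : R -> R) (x a b : R) :
  is_derive f x a -> is_derive g x b -> is_derive (fun t => f t - g t) x (a - b).
Proof. apply (is_derive_minus f g x a b). Qed.

Lemma is_derive_Ropp (f : R -> R) (x a : R) :
  is_derive f x a -> is_derive (fun t => - f t) x (- a).
Proof. apply (is_derive_opp f x a). Qed.

Ltac is_derive_poly :=
  repeat match goal with
  | |- is_derive (fun t => @?A t + @?B t) _ _ => apply (is_derive_Rplus A B)
  | |- is_derive (fun t => @?A t - @?B t) _ _ => apply (is_derive_Rminus A B)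
  | |- is_derive (fun t => @?A t * @?B t) _ _ => apply (Derive.is_derive_mult A B)
  | |- is_derive (fun t => upd _ _ t _) _ _ => apply is_derive_upd
  | |- is_derive (fun t => - @?A t) _ _ => apply (is_derive_Ropp A)
  | |- is_derive (fun _ => ?c) ?x _ => apply (is_derive_Rconst c x)
  end.

Lemma is_derive_sgrad_upd (Phi : pt -> R) (p : pt) (k j : nat) (H : nat -> R) :
  (forall i, is_derive (fun t => pd Phi i (upd p k t)) (p k) (H i)) ->
  (forall i, pd Phi i p = 0) ->
  is_derive (fun t => sgrad Phi (upd p k t) j) (p k) (poisson p H j).
Proof.
  intros HV HV0.
  unfold sgrad, poisson, crossc, blk, gblk.
  destruct j as [|[|[|[|[|[|[|[|[|j]]]]]]]]]; cbn -[upd];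
    (eapply is_derive_val; [is_derive_poly; apply HV |]);
    rewrite ?upd_same, ?HV0; ring.
Qed.

Section SumOfSquares.

Variables f g : pt -> R.
Hypothesis f_derivable : forall q k, ex_derive (fun t => f (upd q k t)) (q k).
Hypothesis g_derivable : forall q k, ex_derive (fun t => g (upd q k t)) (q k).
Hypothesis pd_f_derivable :
  forall q i k, ex_derive (fun t => pd f i (upd q k t)) (q k).
Hypothesis pd_g_derivable :
  forall q i k, ex_derive (fun t => pd g i (upd q k t)) (q k).

Lemma pd_sum_squares (q : pt) (i : nat) :
  pd (fun q => f q ^ 2 + g q ^ 2) i q = 2 * (f q * pd f i q + g q * pd g i q).
Proof.
  apply is_derive_unique.
  apply (is_derive_ext (fun t => f (upd q i t) * f (upd q i t) + g (upd q i t) * g (upd q i t)));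
    [intro t; simpl; ring|].
  eapply is_derive_val.
  - apply is_derive_Rplus; apply Derive.is_derive_mult; apply is_derive_pd; auto.
  - cbv beta; rewrite upd_same; ring.
Qed.

Lemma Alin_sum_squares (p : pt) (j k : nat) :
  f p = 0 -> g p = 0 ->
  Alin (fun q => f q ^ 2 + g q ^ 2) p j k
  = 2 * (pd f k p * poisson p (fun i => pd f i p) j
         + pd g k p * poisson p (fun i => pd g i p) j).
Proof.
  intros Hf Hg.
  transitivity (poisson p (fun i => (2 * pd f k p) * pd f i p + (2 * pd g k p) * pd g i p) j);
    [| rewrite poisson_linear; ring].
  apply is_derive_unique, is_derive_sgrad_upd.
  - intro i.
    apply (is_derive_ext (fun t => 2 * (f (upd p k t) * pd f i (upd p k t)
                                    + g (upd p k t) * pd g i (upd p k t))));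
      [intro t; symmetry; apply pd_sum_squares|].
    eapply is_derive_val.
    + apply Derive.is_derive_mult; [apply is_derive_Rconst|].
      apply is_derive_Rplus; apply Derive.is_derive_mult;
        [apply is_derive_pd | apply Derive_correct | apply is_derive_pd | apply Derive_correct];
        auto.
    + cbv beta; rewrite upd_same, Hf, Hg; ring.
  - intro i; rewrite pd_sum_squares, Hf, Hg; ring.
Qed.

Lemma CPhi_sum_squares (p : pt) :
  f p = 0 -> g p = 0 ->
  CPhi (fun q => f q ^ 2 + g q ^ 2) p
  = - 4 * pairing (fun i => pd f i p) (poisson p (fun i => pd g i p)) ^ 2.
Proof.
  intros Hf Hg.
  rewrite <- half_trace_poisson_rank_two; unfold CPhi.
  f_equal; apply sum_eq; intros j _; apply sum_eq; intros k _.
  rewrite !Alin_sum_squares by assumption; reflexivity.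
Qed.

End SumOfSquares.

Lemma xi2_conj (a b eps0 eps1 lam : R) (p : pt) :
  xi2 a b eps0 eps1 lam p = Cconj (xi1 a b eps0 eps1 lam p).
Proof.
  apply injective_projections;
    cbv [xi1 xi2 x1 x2 z1 z2 w1 w2 w3 Mc al be Cconj Cmult Cplus Cminus Copp RtoC Ci fst snd];
    ring.
Qed.

Lemma Kfun_sum_squares (a b eps0 eps1 lam : R) :
  Kfun a b eps0 eps1 lam
  = fun q => Re (xi1 a b eps0 eps1 lam q) ^ 2 + Im (xi1 a b eps0 eps1 lam q) ^ 2.
Proof.
  apply functional_extensionality; intro q.
  unfold Kfun; rewrite xi2_conj.
  destruct (xi1 a b eps0 eps1 lam q) as [x y]; cbv [Cconj Cmult Re Im fst snd]; ring.
Qed.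

Definition Wxi (eps1 : R) (p : pt) : C := (w1 p + Ci * RtoC eps1 * z1 p)%C.

Definition Yxi (eps0 eps1 lam : R) (p : pt) : C :=
  (RtoC eps0 - Ci * RtoC eps1 * (w3 lam p - Ci * RtoC eps1 * y2 p))%C.

Definition dxi1 (eps0 eps1 lam : R) (k : nat) (p : pt) : C :=
  let c := (RtoC eps0 - Ci * RtoC eps1 * w3 lam p)%C in
  match k with
  | 0 => Wxi eps1 p
  | 1 => Ci * Wxi eps1 p
  | 2 => - (Ci * RtoC eps1 * x1 p)
  | 3 => c
  | 4 => Ci * c
  | 5 => RtoC 2 * Ci * RtoC eps1 * w1 p
  | 6 => Ci * c
  | 7 => - c
  | 8 => - (RtoC 2 * RtoC eps1 * w1 p)
  | _ => 0
  end%C.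

Lemma is_derive_re_xi1 (a b eps0 eps1 lam : R) (q : pt) (k : nat) :
  is_derive (fun t => Re (xi1 a b eps0 eps1 lam (upd q k t))) (q k)
            (Re (dxi1 eps0 eps1 lam k q)).
Proof.
  cbv [xi1 x1 z1 w1 w3 Mc al be Cmult Cplus Cminus Copp RtoC Ci Re fst snd].
  eapply is_derive_val; [is_derive_poly|].
  cbv beta; rewrite upd_same.
  destruct k as [|[|[|[|[|[|[|[|[|k]]]]]]]]];
    cbv [dxi1 Wxi x1 z1 w1 w3 Mc al be Cmult Cplus Cminus Copp RtoC Ci Re fst snd Nat.eqb Nat.add];
    field.
Qed.

Lemma is_derive_im_xi1 (a b eps0 eps1 lam : R) (q : pt) (k : nat) :
  is_derive (fun t => Im (xi1 a b eps0 eps1 lam (upd q k t))) (q k)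
            (Im (dxi1 eps0 eps1 lam k q)).
Proof.
  cbv [xi1 x1 z1 w1 w3 Mc al be Cmult Cplus Cminus Copp RtoC Ci Im fst snd].
  eapply is_derive_val; [is_derive_poly|].
  cbv beta; rewrite upd_same.
  destruct k as [|[|[|[|[|[|[|[|[|k]]]]]]]]];
    cbv [dxi1 Wxi x1 z1 w1 w3 Mc al be Cmult Cplus Cminus Copp RtoC Ci Im fst snd Nat.eqb Nat.add];
    field.
Qed.

Lemma ex_derive_re_dxi1 (eps0 eps1 lam : R) (q : pt) (i k : nat) :
  ex_derive (fun t => Re (dxi1 eps0 eps1 lam i (upd q k t))) (q k).
Proof.
  destruct i as [|[|[|[|[|[|[|[|[|i]]]]]]]]]; eexists;
    cbv [dxi1 Wxi x1 z1 w1 w3 Mc al be Cmult Cplus Cminus Copp RtoC Ci Re fst snd];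
    is_derive_poly.
Qed.

Lemma ex_derive_im_dxi1 (eps0 eps1 lam : R) (q : pt) (i k : nat) :
  ex_derive (fun t => Im (dxi1 eps0 eps1 lam i (upd q k t))) (q k).
Proof.
  destruct i as [|[|[|[|[|[|[|[|[|i]]]]]]]]]; eexists;
    cbv [dxi1 Wxi x1 z1 w1 w3 Mc al be Cmult Cplus Cminus Copp RtoC Ci Im fst snd];
    is_derive_poly.
Qed.

Definition bracket_xi1 (eps0 eps1 lam : R) (p : pt) : R :=
  pairing (fun i => Re (dxi1 eps0 eps1 lam i p))
          (poisson p (fun i => Im (dxi1 eps0 eps1 lam i p))).

Lemma CPhi_Kfun (a b eps0 eps1 lam : R) (p : pt) :
  xi1 a b eps0 eps1 lam p = 0%C ->
  CPhi (Kfun a b eps0 eps1 lam) p = - 4 * bracket_xi1 eps0 eps1 lam p ^ 2.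
Proof.
  intro Hxi.
  assert (Hpdf : forall q i,
    pd (fun q => Re (xi1 a b eps0 eps1 lam q)) i q = Re (dxi1 eps0 eps1 lam i q))
    by (intros; apply is_derive_unique, is_derive_re_xi1).
  assert (Hpdg : forall q i,
    pd (fun q => Im (xi1 a b eps0 eps1 lam q)) i q = Im (dxi1 eps0 eps1 lam i q))
    by (intros; apply is_derive_unique, is_derive_im_xi1).
  rewrite Kfun_sum_squares, CPhi_sum_squares.
  - unfold bracket_xi1.
    rewrite (functional_extensionality _ _ (Hpdf p)), (functional_extensionality _ _ (Hpdg p)).
    reflexivity.
  - intros q k; eexists; apply is_derive_re_xi1.
  - intros q k; eexists; apply is_derive_im_xi1.
  - intros q i k; apply (ex_derive_ext (fun t => Re (dxi1 eps0 eps1 lam i (upd q k t))));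
      [intro t; symmetry; apply Hpdf | apply ex_derive_re_dxi1].
  - intros q i k; apply (ex_derive_ext (fun t => Im (dxi1 eps0 eps1 lam i (upd q k t))));
      [intro t; symmetry; apply Hpdg | apply ex_derive_im_dxi1].
  - rewrite Hxi; reflexivity.
  - rewrite Hxi; reflexivity.
Qed.

Lemma xi1_decomposition (a b eps0 eps1 lam : R) (p : pt) :
  xi1 a b eps0 eps1 lam p
  = (Wxi eps1 p * Wxi eps1 p + x1 p * Yxi eps0 eps1 lam p
     + RtoC (eps1 ^ 2) * (x1 p * y2 p + z1 p * z1 p - RtoC (a ^ 2 - b ^ 2)))%C.
Proof.
  apply injective_projections;
    cbv [xi1 Wxi Yxi x1 y2 z1 w1 w3 Mc al be Cmult Cplus Cminus Copp RtoC Ci fst snd];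
    ring.
Qed.

Lemma x1_y2_add_z1_sq (a b : R) (p : pt) :
  inP6 a b p -> (x1 p * y2 p + z1 p * z1 p)%C = RtoC (a ^ 2 - b ^ 2).
Proof.
  intros [Ha [Hb Hab]].
  rewrite <- Ha, <- Hb.
  transitivity ((al p 0 ^ 2 + al p 1 ^ 2 + al p 2 ^ 2 - (be p 0 ^ 2 + be p 1 ^ 2 + be p 2 ^ 2),
                 2 * (al p 0 * be p 0 + al p 1 * be p 1 + al p 2 * be p 2))).
  - apply injective_projections; cbv [x1 y2 z1 al be Cmult Cplus fst snd]; ring.
  - rewrite Hab; apply injective_projections; cbv [RtoC fst snd]; ring.
Qed.

Lemma xi1_on_P6 (a b eps0 eps1 lam : R) (p : pt) :
  inP6 a b p ->
  xi1 a b eps0 eps1 lam p = (Wxi eps1 p * Wxi eps1 p + x1 p * Yxi eps0 eps1 lam p)%C.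
Proof.
  intro HP; rewrite xi1_decomposition, (x1_y2_add_z1_sq a b p HP); ring.
Qed.

Lemma Cmod_Wxi_sq (a b eps0 eps1 lam : R) (p : pt) :
  inP6 a b p -> xi1 a b eps0 eps1 lam p = 0%C ->
  Cmod (Wxi eps1 p) ^ 2 = Cmod (x1 p) * Cmod (Yxi eps0 eps1 lam p).
Proof.
  intros HP Hxi; rewrite (xi1_on_P6 a b eps0 eps1 lam p HP) in Hxi.
  assert (HW : (Wxi eps1 p * Wxi eps1 p = - (x1 p * Yxi eps0 eps1 lam p))%C).
  { rewrite <- (Cplus_0_l (- _)), <- Hxi; ring. }
  transitivity (Cmod (Wxi eps1 p * Wxi eps1 p)); [rewrite Cmod_mult; ring|].
  rewrite HW, Cmod_opp, Cmod_mult; reflexivity.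
Qed.

Lemma Cmod_sq (z : C) : Cmod z ^ 2 = Re z ^ 2 + Im z ^ 2.
Proof.
  unfold Cmod; rewrite pow2_sqrt; [reflexivity|].
  apply Rplus_le_le_0_compat; apply pow2_ge_0.
Qed.

Lemma sqx_Cmod (p : pt) : sqx p = Cmod (x1 p).
Proof. unfold sqx, Cmod; f_equal; cbv [x1 x2 Cmult Re fst snd]; ring. Qed.

Lemma Nfun_Cmod (eps0 eps1 lam : R) (p : pt) :
  Nfun eps0 eps1 lam p = Cmod (Yxi eps0 eps1 lam p) + eps1 ^ 2 * Cmod (x1 p).
Proof.
  unfold Nfun; rewrite sqx_Cmod; f_equal; unfold Cmod; f_equal.
  cbv [Yxi w3 y1 y2 Mc al be Cmult Cplus Cminus Copp RtoC Ci Re fst snd]; ring.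
Qed.

Definition Fnum (a b eps1 lam : R) (p : pt) : R :=
  Re (x1 p * x2 p * w3 lam p - (x2 p * z1 p * w1 p + x1 p * z2 p * w2 p)
      + Ci * RtoC eps1 * RtoC (a ^ 2 - b ^ 2) * (x1 p - x2 p)).

Lemma Ffun_mul_sqx (a b eps1 lam : R) (p : pt) :
  sqx p <> 0 -> Ffun a b eps1 lam p * sqx p = Fnum a b eps1 lam p.
Proof.
  intro Hs.
  assert (Hs2 : sqx p ^ 2 = Re (x1 p * x2 p)).
  { rewrite sqx_Cmod, Cmod_sq; cbv [x1 x2 Cmult Re Im fst snd]; ring. }
  assert (HF : Fnum a b eps1 lam p
    = Re (x1 p * x2 p) * (Mc p 2 - lam)
      + Re (- (x2 p * z1 p * w1 p + x1 p * z2 p * w2 p)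
            + Ci * RtoC eps1 * RtoC (a ^ 2 - b ^ 2) * (x1 p - x2 p))).
  { cbv [Fnum x1 x2 z1 z2 w1 w2 w3 Mc al be Cmult Cplus Cminus Copp RtoC Ci Re fst snd]; ring. }
  rewrite HF, <- Hs2.
  cbv [Ffun x1 x2 z1 z2 w1 w2 w3 Mc al be Cdiv Cinv Cmult Cplus Cminus Copp RtoC Ci Re Im fst snd].
  field; intro H0; apply Hs; nra.
Qed.

(* Coquelicot's complex division by 0 returns 0. *)
Lemma Ffun_sqx_0 (a b eps1 lam : R) (p : pt) : sqx p = 0 -> Ffun a b eps1 lam p = 0.
Proof.
  intro Hs; unfold Ffun; rewrite Hs.
  cbv [Cdiv Cinv Cmult Cplus Cminus Copp RtoC Ci Re Im fst snd]; unfold Rdiv; ring.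
Qed.

(* The cofactor is the quotient of the left-hand side by xi1 (and its conjugate
   by conj xi1), viewed as polynomials in W and conj W; the remainder is the
   multiple of alpha.beta in [E], which vanishes on P^6. *)
Lemma bracket_xi1_identity (a b eps0 eps1 : R) (p : pt) :
  inP6 a b p ->
  bracket_xi1 eps0 eps1 0 p * Cmod (x1 p) ^ 2
  + (Cmod (Wxi eps1 p) ^ 2 + eps1 ^ 2 * Cmod (x1 p) ^ 2) * Fnum a b eps1 0 p
  = 2 * Re (Cconj (x1 p) * (Ci * RtoC (eps1 * Cmod (x1 p) ^ 2) - Cconj (Wxi eps1 p) * z1 p)
            * xi1 a b eps0 eps1 0 p).
Proof.
  intros [Ha [Hb Hab]].
  assert (E :
    bracket_xi1 eps0 eps1 0 p * Cmod (x1 p) ^ 2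
    + (Cmod (Wxi eps1 p) ^ 2 + eps1 ^ 2 * Cmod (x1 p) ^ 2) * Fnum a b eps1 0 p
    = 2 * Re (Cconj (x1 p) * (Ci * RtoC (eps1 * Cmod (x1 p) ^ 2) - Cconj (Wxi eps1 p) * z1 p)
              * xi1 a b eps0 eps1 0 p)
      + 4 * eps1 * (al p 0 * be p 0 + al p 1 * be p 1 + al p 2 * be p 2)
        * (eps1 * Im (Wxi eps1 p * x1 p * Cconj (z1 p)) - Cmod (Wxi eps1 p) ^ 2 * Re (x1 p))).
  { unfold xi1, Fnum; rewrite <- Ha, <- Hb, !Cmod_sq.
    cbv [bracket_xi1 pairing poisson crossc blk dxi1 Wxi x1 x2 z1 z2 w1 w2 w3 Mc al be
         Cconj Cmult Cplus Cminus Copp RtoC Ci Re Im fst snd sum_f_R0 Nat.ltb Nat.leb Nat.add Nat.sub].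
    field. }
  rewrite E, Hab; ring.
Qed.

Lemma bracket_xi1_momentum_free (eps0 eps1 lam : R) (p : pt) :
  x1 p = 0%C -> Wxi eps1 p = 0%C -> bracket_xi1 eps0 eps1 lam p = 0.
Proof.
  intros HX HW; apply pairing_poisson_momentum_free;
    intros [|[|[|i]]] Hi; try lia; cbv [dxi1]; rewrite ?HX, ?HW;
    cbv [Cmult Copp RtoC Ci Re Im fst snd]; ring.
Qed.

Lemma bracket_xi1_on_M1 (a b eps0 eps1 : R) (p : pt) :
  inP6 a b p -> xi1 a b eps0 eps1 0 p = 0%C ->
  bracket_xi1 eps0 eps1 0 p = - (Nfun eps0 eps1 0 p * Ffun a b eps1 0 p).
Proof.
  intros HP Hxi.
  pose proof (Cmod_Wxi_sq a b eps0 eps1 0 p HP Hxi) as HW.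
  rewrite Nfun_Cmod.
  destruct (Req_dec (Cmod (x1 p)) 0) as [H0 | Hpos].
  - assert (HX : x1 p = 0%C) by (apply Cmod_eq_0; exact H0).
    assert (HW0 : Wxi eps1 p = 0%C) by (apply Cmod_eq_0; rewrite H0 in HW; nra).
    rewrite bracket_xi1_momentum_free, Ffun_sqx_0 by (rewrite ?sqx_Cmod; assumption).
    ring.
  - pose proof (bracket_xi1_identity a b eps0 eps1 p HP) as Hid.
    rewrite Hxi, Cmult_0_r, HW, <- Ffun_mul_sqx, sqx_Cmod in Hid by (rewrite sqx_Cmod; exact Hpos).
    cbv [Re RtoC fst] in Hid.
    apply (Rmult_eq_reg_r (Cmod (x1 p) ^ 2)); [lra | now apply pow_nonzero].
Qed.

Theorem theorem4 :
  forall (a b eps0 eps1 : R) (p : pt),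
    0 < b -> b < a -> 0 <= eps0 ->
    inP6 a b p ->
    xi1 a b eps0 eps1 0 p = RtoC 0 ->
    xi2 a b eps0 eps1 0 p = RtoC 0 ->
    CPhi (Kfun a b eps0 eps1 0) p
      = - 4 * (Nfun eps0 eps1 0 p) ^ 2 * (Ffun a b eps1 0 p) ^ 2
    /\ (Nfun eps0 eps1 0 p * Ffun a b eps1 0 p <> 0 ->
          outer_center (Kfun a b eps0 eps1 0) p)
    /\ (Nfun eps0 eps1 0 p * Ffun a b eps1 0 p = 0 ->
          outer_degenerate (Kfun a b eps0 eps1 0) p).
Proof.
  (* The hypothesis on xi2 follows from the one on xi1 by xi2_conj. *)
  intros a b eps0 eps1 p _ _ _ HP Hxi _.
  assert (HC : CPhi (Kfun a b eps0 eps1 0) p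
               = - 4 * (Nfun eps0 eps1 0 p * Ffun a b eps1 0 p) ^ 2).
  { rewrite CPhi_Kfun, (bracket_xi1_on_M1 a b) by assumption; ring. }
  unfold outer_center, outer_degenerate; rewrite HC.
  split; [ring | split].
  - intro Hne; pose proof (pow2_gt_0 _ Hne); lra.
  - intros ->; ring.
Qed.
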